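(* In the setting described in the context, let $p$ be a prime, $k\ge1$ an integer, $1\le j\le r$, and $n_0,\dots,n_{j-1}\in\mathbb Z$ such that $\big(u_j+\sum_{i=0}^{j-1}n_iu_i\big)h'\in p^kL$. Then $p^k$ divides the integer $c_{jj0}$, and therefore $p^k$ divides $\lambda$.
   Context: Let $\mathbb K$ be a number field of degree $d=r+2\ge2$ with exactly one pair of complex conjugate embeddings; order its embeddings $\sigma_1,\dots,\sigma_r$ (real), $\sigma_{\mathbb C}$, $\overline{\sigma_{\mathbb C}}$; a $\mathbb Q$-basis $(e_0,\dots,e_{r+1})$ of $\mathbb K$ is positive if $i\cdot\det(\sigma_j(e_{k-1}))_{1\le j,k\le d}>0$. Let $\mathfrak f\ne\mathcal O_{\mathbb K}$ be an integral ideal, $q\mathbb Z=\mathfrak f\cap\mathbb Z$, $\mathfrak b$ an integral ideal coprime to $\mathfrak f$, $L=\mathfrak f\mathfrak b^{-1}$, $\mathfrak a$ an integral ideal coprime to $\mathfrak f\mathfrak b$ with $\mathfrak a^{-1}L/L$ cyclic, $N=\mathcal N(\mathfrak a)$; $h\in L$ is admissible if $h/q-1\in L$ and $h/N$ generates $\mathfrak a^{-1}L/L$. Let $\mathcal O^{+,\times}_{\mathfrak f}$ be the group of units $\equiv1\bmod\mathfrak f$ positive at all real embeddings, $u_1,\dots,u_r\in\mathcal O^{+,\times}_{\mathfrak f}$ with $1,u_1,\dots,u_r$ linearly independent over $\mathbb Q$, $u_0=1$. Let $h=mh'\in L$ be admissible with $m\in\mathbb Z_{>0}$ and $h'$ primitive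 in $L$. Fix a positive $\mathbb Z$-basis $(e_0=h',e_1,\dots,e_{r+1})$ of $L$ such that $u_ih'=\sum_{k=0}^ic_{ik0}e_k$ with $c_{ik0}\in\mathbb Z$ and $c_{ii0}>0$ for $1\le i\le r$, and put $\lambda=\prod_{i=1}^rc_{ii0}$. *)

From HB Require Import structures.
From mathcomp Require Import all_boot all_order all_algebra all_field.
Set Implicit Arguments. Unset Strict Implicit. Unset Printing Implicit Defensive.
Import Order.TTheory GRing.Theory Num.Theory.
Local Open Scope ring_scope.

Section NumberFieldDefs.
Variable K : fieldExtType rat.

Definition algint (x : K) : Prop :=
  exists P : {poly int},
    P \is monic /\ root (map_poly (fun z : int => (z%:~R : K)) P) x.

Definition int_ideal (I : K -> Prop) : Prop :=
  [/\ (forall x, I x -> algint x), I 0,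
      (forall x y, I x -> I y -> I (x + y)),
      (forall a x, algint a -> I x -> I (a * x)) &
      exists x, I x /\ x != 0].

Definition coprime_ideals (I J : K -> Prop) : Prop :=
  exists x y, [/\ I x, J y & x + y = 1].

(* F B^{-1} = { x | x B ⊆ F } (B invertible fractional ideal) *)
Definition ideal_quot (F B : K -> Prop) : K -> Prop :=
  fun x => forall y, B y -> F (x * y).

(* N(A) = #(O_K / A) = N *)
Definition ideal_norm (A : K -> Prop) (N : nat) : Prop :=
  exists s : seq K,
    [/\ size s = N, (forall x, x \in s -> algint x),
        (forall i j, (i < N)%N -> (j < N)%N -> A (nth 0 s i - nth 0 s j) -> i = j) &
        (forall x, algint x -> exists2 y, y \in s & A (x - y))].

Definition quot_generated_by (M L : K -> Prop) (g : K) : Prop :=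
  M g /\ forall x, M x -> exists n : int, L (x - g *~ n).

Definition quot_cyclic (M L : K -> Prop) : Prop :=
  exists g, quot_generated_by M L g.

Definition admissible (L Ainv_L : K -> Prop) (q N : nat) (h : K) : Prop :=
  [/\ L h, L (h / q%:R - 1) & quot_generated_by Ainv_L L (h / N%:R)].

Definition unit_plus_f (f : K -> Prop) (r : nat)
    (emb : nat -> {rmorphism K -> algC}) (u : K) : Prop :=
  [/\ algint u, (exists v, algint v /\ u * v = 1), f (u - 1) &
      forall j, (j < r)%N -> 0 < emb j u].

Definition primitive_in (L : K -> Prop) (x : K) : Prop :=
  L x /\ forall t : nat, (1 < t)%N -> ~ L (x / t%:R).

Definition Zbasis (L : K -> Prop) (d : nat) (e : nat -> K) : Prop :=
  (forall x, L x <-> exists c : 'I_d -> int, x = \sum_(k < d) e k *~ c k) /\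
  (forall c : 'I_d -> int, \sum_(k < d) e k *~ c k = 0 -> forall k, c k = 0).

End NumberFieldDefs.

From HB Require Import structures.
From mathcomp Require Import all_boot all_order all_algebra all_field.
Set Implicit Arguments. Unset Strict Implicit. Unset Printing Implicit Defensive.
Import Order.TTheory GRing.Theory Num.Theory.
Local Open Scope ring_scope.

(* Expand v := (u_j + sum_(i<j) n_i u_i) h' in the basis e.  Each u_i h' only
   involves e_0, ..., e_i, so the e_j-coordinate of v is c_jj.  On the other
   hand v = p^k y with y in L, so every coordinate of v is p^k times an
   integer; uniqueness of coordinates gives c_jj = p^k y_j. *)

Section IntCombinations.
Variables (V : zmodType) (d : nat) (e : nat -> V).

Definition zcomb (a : 'I_d -> int) : V := \sum_(k < d) e k *~ a k.

Lemma zcombD a b : zcomb a + zcomb b = zcomb (fun k => a k + b k).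
Proof. by rewrite -big_split; apply: eq_bigr => k _; rewrite mulrzDr. Qed.

Lemma zcombB a b : zcomb a - zcomb b = zcomb (fun k => a k - b k).
Proof. by rewrite -sumrB; apply: eq_bigr => k _; rewrite mulrzBr. Qed.

Lemma zcomb_sumMz m (a : nat -> 'I_d -> int) (n : nat -> int) :
  \sum_(i < m) zcomb (a i) *~ n i = zcomb (fun k => \sum_(i < m) a i k * n i).
Proof.
rewrite /zcomb; under eq_bigr do rewrite mulrz_suml.
rewrite exchange_big; apply: eq_bigr => k _ /=.
by rewrite mulrz_sumr; apply: eq_bigr => i _; rewrite mulrzA.
Qed.

Lemma zcomb_widen i (a : nat -> int) : (i < d)%N ->
  \sum_(k < i.+1) e k *~ a k = zcomb (fun k => if (k <= i)%N then a k else 0).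
Proof.
move=> lt_id; rewrite (big_ord_widen _ (fun k => e k *~ a k) lt_id) big_mkcond.
by apply: eq_bigr => k _; rewrite ltnS; case: ifP.
Qed.

Hypothesis e_free : forall a : 'I_d -> int, zcomb a = 0 -> forall k, a k = 0.

Lemma zcomb_inj a b : zcomb a = zcomb b -> a =1 b.
Proof.
move=> eq_ab k; apply: subr0_eq.
have diff0 : zcomb (fun k => a k - b k) = 0 by rewrite -zcombB eq_ab subrr.
exact: e_free diff0 k.
Qed.

Lemma triangular_zcomb_diag (x : nat -> V) (a : nat -> nat -> int)
    (j : 'I_d) (n : nat -> int) (b : 'I_d -> int) :
  (forall i, (i <= j)%N -> x i = \sum_(k < i.+1) e k *~ a i k) ->
  x j + \sum_(i < j) x i *~ n i = zcomb b -> b j = a j j.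
Proof.
move=> x_tri; set pad := fun i (k : 'I_d) => if (k <= i)%N then a i k else 0.
have x_pad i : (i <= j)%N -> x i = zcomb (pad i).
  by move=> le_ij; rewrite x_tri // zcomb_widen // (leq_ltn_trans le_ij).
have sum_pad : \sum_(i < j) x i *~ n i = \sum_(i < j) zcomb (pad i) *~ n i.
  by apply: eq_bigr => i _; rewrite x_pad // ltnW.
rewrite x_pad // sum_pad zcomb_sumMz zcombD => /zcomb_inj/(_ j)/esym ->.
rewrite /pad leqnn big1 ?addr0 // => i _.
by rewrite leqNgt ltn_ord mul0r.
Qed.

End IntCombinations.

Lemma dvdz_prod_nat (m n j : nat) (F : nat -> int) (z : int) :
  (m <= j < n)%N -> (z %| F j)%Z -> (z %| \prod_(m <= i < n) F i)%Z.
Proof.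
by move=> j_in z_Fj; rewrite (big_rem j) ?mem_index_iota //=; exact: dvdz_mulr.
Qed.

Theorem lemma17
  (K : fieldExtType rat) (r : nat) (hdim : \dim {: K} = r.+2)
  (* embeddings: emb 0..r-1 real, emb r = sigma_C, emb (r+1) = conj sigma_C *)
  (emb : nat -> {rmorphism K -> algC})
  (hreal : forall j, (j < r)%N -> forall x, emb j x \is Num.real)
  (hcplx : exists x, emb r x \isn't Num.real)
  (hconj : forall x, emb r.+1 x = (emb r x)^*)
  (hdist : forall j1 j2, (j1 < r.+2)%N -> (j2 < r.+2)%N ->
             (forall x, emb j1 x = emb j2 x) -> j1 = j2)
  (hall : forall s : {rmorphism K -> algC},
             exists2 j, (j < r.+2)%N & forall x, s x = emb j x)
  (* ideals *)
  (f b a : K -> Prop) (hf : int_ideal f) (hf1 : ~ f 1)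
  (q : nat) (hq : forall z : int, f (z%:~R) <-> (q%:Z %| z)%Z)
  (hb : int_ideal b) (hbf : coprime_ideals f b)
  (L : K -> Prop) (hL : L = ideal_quot f b)
  (ha : int_ideal a) (haf : coprime_ideals a f) (hab : coprime_ideals a b)
  (hcyc : quot_cyclic (ideal_quot L a) L)
  (N : nat) (hN : ideal_norm a N)
  (* units *)
  (u : nat -> K) (hu0 : u 0%N = 1)
  (hu : forall i, (1 <= i <= r)%N -> unit_plus_f f r emb (u i))
  (hfree : free [seq u i | i <- iota 0 r.+1])
  (* h = m h' admissible, h' primitive *)
  (h h' : K) (m : nat) (hm : (0 < m)%N) (hh : h = m%:R * h')
  (hadm : admissible L (ideal_quot L a) q N h)
  (hprim : primitive_in L h')
  (* positive Z-basis (e_0 = h', e_1, ..., e_{r+1}) of L *)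
  (e : nat -> K) (he0 : e 0%N = h') (hbasis : Zbasis L r.+2 e)
  (hpos : 0 < 'i * \det (\matrix_(j < r.+2, k < r.+2) emb j (e k)))
  (c : nat -> nat -> int)
  (hc : forall i, (1 <= i <= r)%N ->
          u i * h' = \sum_(k < i.+1) e k *~ c i k)
  (hcpos : forall i, (1 <= i <= r)%N -> 0 < c i i)
  (* the statement proper *)
  (p : nat) (hp : prime p) (k : nat) (hk : (1 <= k)%N)
  (j : nat) (hj : (1 <= j <= r)%N) (n : nat -> int)
  (hmem : exists2 y, L y &
            (u j + \sum_(i < j) u i *~ n i) * h' = (p ^ k)%:R * y) :
  ((p ^ k)%:Z %| c j j)%Z /\
  ((p ^ k)%:Z %| \prod_(1 <= i < r.+1) c i i)%Z.
Proof.
have [j_gt0 le_jr] := andP hj.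
have [[coord_L e_free] [y Ly eq_v]] := (hbasis, hmem).
have [dy y_def] := (coord_L y).1 Ly.
(* [hc] only covers i >= 1; the row i = 0 is u_0 h' = h' = e_0. *)
pose c' i kk := if i == 0%N then 1 else c i kk.
have uh_tri i : (i <= j)%N -> u i * h' = \sum_(kk < i.+1) e kk *~ c' i kk.
  rewrite /c'; case: eqP => [-> _ | /eqP i_neq0 le_ij].
    by rewrite hu0 mul1r big_ord1 he0.
  by apply: hc; rewrite lt0n i_neq0 (leq_trans le_ij).
have lt_j : (j < r.+2)%N by rewrite ltnS leqW.
have dvd_cjj : ((p ^ k)%:Z %| c j j)%Z.
  have <- : c' j j = c j j by rewrite /c' gtn_eqF.
  have := triangular_zcomb_diag e_free (j := Ordinal lt_j) uh_tri.
  move=> /(_ n (fun kk => dy kk * (p ^ k)%:Z)) /= <-; first exact: dvdz_mull.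
  have v_expand : (u j + \sum_(i < j) u i *~ n i) * h'
                  = u j * h' + \sum_(i < j) (u i * h') *~ n i.
    by rewrite mulrDl mulr_suml; congr (_ + _); apply: eq_bigr => i _; rewrite mulrzAl.
  rewrite -v_expand eq_v y_def mulr_natl -mulrz_nat /zcomb mulrz_suml.
  by apply: eq_bigr => kk _; rewrite mulrzA natz.
by split=> //; apply: dvdz_prod_nat dvd_cjj; rewrite j_gt0 ltnS.
Qed.
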